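(* Let $\mu>0$ and let $\psi:(0,\infty)\times\mathbb T\to\mathbb R$ be such that $\psi_\beta$ exists and is $C^1$ on $(0,\infty)\times\mathbb T$, there are constants $0<m\le M$ with $-M\beta^{-2\mu}\le\psi_\beta(\beta,\phi)\le-m\beta^{-2\mu}$ for all $(\beta,\phi)$, and $\psi_{\beta\varphi}:=(\partial_\phi-\partial_\beta)\psi_\beta<0$ everywhere. Define $A(\beta,\phi)=(a(\beta,\phi),\beta+\phi)\in\mathbb R\times\mathbb T$ with $a=\frac12\log(-\psi_\beta/\mu)$, and $B(a,\theta)=(e^a\cos\theta,e^a\sin\theta)$. Then $T=B\circ A$ is a $C^1$-diffeomorphism from $(0,\infty)\times\mathbb T$ onto $\mathbb R^2\setminus\{0\}$.
   Context: $\mathbb T=\mathbb R/2\pi\mathbb Z$. *)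

From Stdlib Require Import Reals.
From Coquelicot Require Import Coquelicot.
Open Scope R_scope.

Definition C1_on (U : R -> R -> Prop) (f : R -> R -> R) : Prop :=
  forall x y, U x y ->
    ex_derive (fun t => f t y) x /\
    ex_derive (fun t => f x t) y /\
    continuous (fun p : R * R => f (fst p) (snd p)) (x, y) /\
    continuous (fun p : R * R => Derive (fun t => f t (snd p)) (fst p)) (x, y) /\
    continuous (fun p : R * R => Derive (fun t => f (fst p) t) (snd p)) (x, y).

Definition dpsi (psi : R -> R -> R) (b p : R) : R :=
  Derive (fun t => psi t p) b.

Definition psi_bphi (psi : R -> R -> R) (b p : R) : R :=
  Derive (fun t => dpsi psi b t) p - Derive (fun t => dpsi psi t p) b.

Definition Amap (mu : R) (psi : R -> R -> R) (b p : R) : R * R :=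
  (1/2 * ln (- dpsi psi b p / mu), b + p).

Definition Bmap (q : R * R) : R * R :=
  (exp (fst q) * cos (snd q), exp (fst q) * sin (snd q)).

Definition Tmap (mu : R) (psi : R -> R -> R) (b p : R) : R * R :=
  Bmap (Amap mu psi b p).

From Stdlib Require Import Reals Lra ClassicalEpsilon.
From Coquelicot Require Import Coquelicot.
Open Scope R_scope.

(* (x, y) = T(b, phi) exactly when b + phi is a polar angle q of (x, y) and
   psi_beta(b, phi) = -mu (x^2 + y^2).  Along a line b + phi = q the function
   b |-> psi_beta(b, q - b) has derivative -psi_{beta phi} > 0, so it is strictly
   increasing, and the power bounds on psi_beta make it cross the level -mu r^2:
   the equation has exactly one solution b = beta(x, y).  Periodicity in phi makes
   this independent of the choice of q.  Since the derivative -psi_{beta phi} never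
   vanishes, implicit differentiation shows that beta is C^1, and the angle phi is
   recovered through cos phi and sin phi, which are C^1 in (x, y) and beta.  That T
   itself is C^1 is closure of C^1 under sums, products and composition. *)

(** * C^1 functions of two variables *)

(* Coquelicot states these with the generic [plus] and [mult], which [apply] does
   not unify with [Rplus] and [Rmult]. *)
Section RealContinuity.
Context {T : UniformSpace}.

Lemma continuous_Rplus (f g : T -> R) x :
  continuous f x -> continuous g x -> continuous (fun z => f z + g z) x.
Proof. exact (continuous_plus f g x). Qed.

Lemma continuous_Rmult (f g : T -> R) x :
  continuous f x -> continuous g x -> continuous (fun z => f z * g z) x.
Proof. exact (continuous_mult f g x). Qed.

Lemma continuous_Ropp (f : T -> R) x : continuous f x -> continuous (fun z => - f z) x.
Proof. exact (continuous_opp f x). Qed.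

Lemma continuous_Rminus (f g : T -> R) x :
  continuous f x -> continuous g x -> continuous (fun z => f z - g z) x.
Proof. intros; apply continuous_Rplus; [|apply continuous_Ropp]; assumption. Qed.

Lemma continuous_Rcomp (phi : R -> R) (f : T -> R) x :
  continuous f x -> continuous phi (f x) -> continuous (fun z => phi (f z)) x.
Proof. exact (continuous_comp f phi x). Qed.

Lemma continuous_Rinv_fun (f : T -> R) x :
  continuous f x -> f x <> 0 -> continuous (fun z => / f z) x.
Proof. intros; apply continuous_Rcomp; [|apply continuous_Rinv]; assumption. Qed.

Lemma continuous_pos_locally (g : T -> R) x :
  continuous g x -> 0 < g x -> locally x (fun z => 0 < g z).
Proof. intros Hc Hp; exact (Hc _ (open_gt 0 (g x) Hp)). Qed.

End RealContinuity.

Lemma continuous_of_is_derive (phi phi' : R -> R) z : is_derive phi z (phi' z) -> continuous phi z.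
Proof. intros H; apply (ex_derive_continuous phi); eexists; eassumption. Qed.

Lemma is_derive_Rplus (f g : R -> R) x a b :
  is_derive f x a -> is_derive g x b -> is_derive (fun t => f t + g t) x (a + b).
Proof. exact (is_derive_plus f g x a b). Qed.

Lemma locally_neq0 (z0 : R) : z0 <> 0 -> locally z0 (fun z => z <> 0).
Proof.
  intros H. assert (Hp : 0 < z0 * z0) by (apply Rsqr_pos_lt; assumption).
  generalize (continuous_pos_locally (fun z => z * z) z0
                (continuous_Rmult _ _ _ (continuous_id _) (continuous_id _)) Hp).
  apply filter_imp; intros z Hz ->; lra.
Qed.

(* Partials are required near (x, y), not only at it, so that continuity of the
   partials can be propagated through sums and compositions. *)
Definition C1_at (F : R -> R -> R) (x y : R) : Prop :=
  locally (x, y) (fun q => ex_derive (fun t => F t (snd q)) (fst q) /\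
                           ex_derive (fun t => F (fst q) t) (snd q)) /\
  continuous (fun q => F (fst q) (snd q)) (x, y) /\
  continuous (fun q => Derive (fun t => F t (snd q)) (fst q)) (x, y) /\
  continuous (fun q => Derive (fun t => F (fst q) t) (snd q)) (x, y).

Lemma C1_on_intro (U : R -> R -> Prop) F :
  (forall x y, U x y -> C1_at F x y) -> C1_on U F.
Proof.
  intros H x y Hxy. destruct (H x y Hxy) as [Hd Hc].
  apply locally_singleton in Hd. tauto.
Qed.

Lemma C1_at_of_C1_on (U : R -> R -> Prop) F x y :
  locally (x, y) (fun q => U (fst q) (snd q)) -> C1_on U F -> C1_at F x y.
Proof.
  intros HU HF.
  destruct (HF x y (locally_singleton _ _ HU)) as [_ [_ Hc]].
  split; [|exact Hc].
  revert HU; apply filter_imp; intros q Hq.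
  destruct (HF _ _ Hq) as [H1 [H2 _]]; split; assumption.
Qed.

Lemma C1_at_ex_derive F x y : C1_at F x y ->
  ex_derive (fun t => F t y) x /\ ex_derive (fun t => F x t) y.
Proof. intros [H _]; exact (locally_singleton _ _ H). Qed.

Lemma locally_comp_pair (U V : R * R -> R) q0 (P : R * R -> Prop) :
  continuous U q0 -> continuous V q0 -> locally (U q0, V q0) P ->
  locally q0 (fun q => P (U q, V q)).
Proof.
  intros HU HV HP.
  apply (continuous_comp_2 U V pair q0 HU HV); [|exact HP].
  apply continuous_ext with (fun p => p); [intros [a b]; reflexivity|apply continuous_id].
Qed.

Lemma C1_at_differentiable H a b : C1_at H a b ->
  differentiable_pt_lim H a b (Derive (fun t => H t b) a) (Derive (fun t => H a t) b).
Proof.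
  intros [Hd [_ [H1 _]]].
  apply filterdiff_differentiable_pt_lim.
  eapply filterdiff_ext_lin.
  - apply (is_derive_filterdiff H a b (fun u v => Derive (fun t => H t v) u)); [|apply Derive_correct|exact H1].
    + revert Hd; apply filter_imp; intros q [Hq _]; apply Derive_correct, Hq.
    + apply locally_singleton in Hd; apply Hd.
  - intros u; reflexivity.
Qed.

Lemma is_derive_comp2 H (u v : R -> R) t du dv :
  C1_at H (u t) (v t) -> is_derive u t du -> is_derive v t dv ->
  is_derive (fun s => H (u s) (v s)) t
    (Derive (fun z => H z (v t)) (u t) * du + Derive (fun z => H (u t) z) (v t) * dv).
Proof.
  intros HH Hu Hv. apply is_derive_Reals, derivable_pt_lim_comp_2d.
  - apply C1_at_differentiable, HH.
  - apply is_derive_Reals, Hu.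
  - apply is_derive_Reals, Hv.
Qed.

Lemma C1_at_comp2 H U V x y :
  locally (U x y, V x y) (fun p => C1_at H (fst p) (snd p)) ->
  C1_at U x y -> C1_at V x y -> C1_at (fun a b => H (U a b) (V a b)) x y.
Proof.
  intros HH [U1 [U2 [U3 U4]]] [V1 [V2 [V3 V4]]].
  pose proof (locally_singleton _ _ HH) as [_ [HHc [HH1 HH2]]].
  assert (Hnear : locally (x, y) (fun q =>
     C1_at H (U (fst q) (snd q)) (V (fst q) (snd q)) /\
     (ex_derive (fun t => U t (snd q)) (fst q) /\ ex_derive (fun t => U (fst q) t) (snd q)) /\
     (ex_derive (fun t => V t (snd q)) (fst q) /\ ex_derive (fun t => V (fst q) t) (snd q)))).
  { apply filter_and; [|apply filter_and; assumption].
    exact (locally_comp_pair _ _ (x, y) (fun p => C1_at H (fst p) (snd p)) U2 V2 HH). }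
  assert (Hcomp : forall G : R -> R -> R,
      continuous (fun p => G (fst p) (snd p)) (U x y, V x y) ->
      continuous (fun q => G (U (fst q) (snd q)) (V (fst q) (snd q))) (x, y)).
  { intros G HG; exact (continuous_comp_2 _ _ G (x, y) U2 V2 HG). }
  repeat split.
  - revert Hnear; apply filter_imp; intros q [Hq [[A1 A2] [B1 B2]]].
    split; eexists.
    + apply (is_derive_comp2 H (fun t => U t (snd q)) (fun t => V t (snd q)));
        [exact Hq|apply Derive_correct; assumption ..].
    + apply (is_derive_comp2 H (fun t => U (fst q) t) (fun t => V (fst q) t));
        [exact Hq|apply Derive_correct; assumption ..].
  - apply Hcomp, HHc.
  - apply continuous_ext_loc with (fun q =>
      Derive (fun z => H z (V (fst q) (snd q))) (U (fst q) (snd q)) * Derive (fun t => U t (snd q)) (fst q)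
      + Derive (fun z => H (U (fst q) (snd q)) z) (V (fst q) (snd q)) * Derive (fun t => V t (snd q)) (fst q)).
    + revert Hnear; apply filter_imp; intros q [Hq [[A1 A2] [B1 B2]]].
      symmetry; apply is_derive_unique.
      apply (is_derive_comp2 H (fun t => U t (snd q)) (fun t => V t (snd q)));
        [exact Hq|apply Derive_correct; assumption ..].
    + apply continuous_Rplus; apply continuous_Rmult; auto;
        [apply (Hcomp (fun a b => Derive (fun z => H z b) a))
        |apply (Hcomp (fun a b => Derive (fun z => H a z) b))]; assumption.
  - apply continuous_ext_loc with (fun q =>
      Derive (fun z => H z (V (fst q) (snd q))) (U (fst q) (snd q)) * Derive (fun t => U (fst q) t) (snd q)
      + Derive (fun z => H (U (fst q) (snd q)) z) (V (fst q) (snd q)) * Derive (fun t => V (fst q) t) (snd q)).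
    + revert Hnear; apply filter_imp; intros q [Hq [[A1 A2] [B1 B2]]].
      symmetry; apply is_derive_unique.
      apply (is_derive_comp2 H (fun t => U (fst q) t) (fun t => V (fst q) t));
        [exact Hq|apply Derive_correct; assumption ..].
    + apply continuous_Rplus; apply continuous_Rmult; auto;
        [apply (Hcomp (fun a b => Derive (fun z => H z b) a))
        |apply (Hcomp (fun a b => Derive (fun z => H a z) b))]; assumption.
Qed.

Lemma C1_at_const c x y : C1_at (fun _ _ => c) x y.
Proof.
  repeat split.
  - apply filter_forall; split; apply ex_derive_const.
  - apply continuous_const.
  - apply continuous_ext with (fun _ => 0); [intros; now rewrite Derive_const|apply continuous_const].
  - apply continuous_ext with (fun _ => 0); [intros; now rewrite Derive_const|apply continuous_const].
Qed.

Lemma C1_at_fst x y : C1_at (fun a _ => a) x y.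
Proof.
  repeat split.
  - apply filter_forall; split; [apply ex_derive_id|apply ex_derive_const].
  - apply continuous_fst.
  - apply continuous_ext with (fun _ => 1); [intros; now rewrite Derive_id|apply continuous_const].
  - apply continuous_ext with (fun _ => 0); [intros; now rewrite Derive_const|apply continuous_const].
Qed.

Lemma C1_at_snd x y : C1_at (fun _ b => b) x y.
Proof.
  repeat split.
  - apply filter_forall; split; [apply ex_derive_const|apply ex_derive_id].
  - apply continuous_snd.
  - apply continuous_ext with (fun _ => 0); [intros; now rewrite Derive_const|apply continuous_const].
  - apply continuous_ext with (fun _ => 1); [intros; now rewrite Derive_id|apply continuous_const].
Qed.

Lemma C1_at_Rplus x y : C1_at (fun a b => a + b) x y.
Proof.
  repeat split.
  - apply filter_forall; split; auto_derive; trivial.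
  - apply continuous_Rplus; [apply continuous_fst|apply continuous_snd].
  - apply continuous_ext with (fun _ => 1); [|apply continuous_const].
    intros; symmetry; apply is_derive_unique; auto_derive; trivial; ring.
  - apply continuous_ext with (fun _ => 1); [|apply continuous_const].
    intros; symmetry; apply is_derive_unique; auto_derive; trivial; ring.
Qed.

Lemma C1_at_Rmult x y : C1_at (fun a b => a * b) x y.
Proof.
  repeat split.
  - apply filter_forall; split; auto_derive; trivial.
  - apply continuous_Rmult; [apply continuous_fst|apply continuous_snd].
  - apply continuous_ext with (fun q : R * R => snd q); [|apply continuous_snd].
    intros; symmetry; apply is_derive_unique; auto_derive; trivial; ring.
  - apply continuous_ext with (fun q : R * R => fst q); [|apply continuous_fst].
    intros; symmetry; apply is_derive_unique; auto_derive; trivial; ring.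
Qed.

Lemma C1_at_plus F G x y :
  C1_at F x y -> C1_at G x y -> C1_at (fun a b => F a b + G a b) x y.
Proof.
  apply (C1_at_comp2 (fun a b => a + b)).
  apply filter_forall; intros; apply C1_at_Rplus.
Qed.

Lemma C1_at_mult F G x y :
  C1_at F x y -> C1_at G x y -> C1_at (fun a b => F a b * G a b) x y.
Proof.
  apply (C1_at_comp2 (fun a b => a * b)).
  apply filter_forall; intros; apply C1_at_Rmult.
Qed.

Lemma C1_at_fun_fst (phi phi' : R -> R) a b :
  locally a (fun z => is_derive phi z (phi' z)) -> continuous phi' a ->
  C1_at (fun u _ => phi u) a b.
Proof.
  intros Hd Hc.
  pose proof (locally_singleton _ _ Hd) as Ha.
  assert (Hdq : locally (a, b) (fun q : R * R => is_derive phi (fst q) (phi' (fst q))))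
    by exact (continuous_fst a b _ Hd).
  repeat split.
  - revert Hdq; apply filter_imp; intros q Hq.
    split; [eexists; exact Hq|apply ex_derive_const].
  - apply (continuous_comp fst phi); [apply continuous_fst|exact (continuous_of_is_derive _ _ _ Ha)].
  - apply continuous_ext_loc with (fun q : R * R => phi' (fst q)).
    + revert Hdq; apply filter_imp; intros q Hq.
      symmetry; apply is_derive_unique, Hq.
    + apply (continuous_comp fst phi'); [apply continuous_fst|exact Hc].
  - apply continuous_ext with (fun _ => 0); [intros; now rewrite Derive_const|apply continuous_const].
Qed.

Lemma C1_at_comp (phi phi' : R -> R) F x y :
  locally (F x y) (fun z => is_derive phi z (phi' z) /\ continuous phi' z) ->
  C1_at F x y -> C1_at (fun a b => phi (F a b)) x y.
Proof.
  intros Hphi HF.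
  apply (C1_at_comp2 (fun u _ => phi u) F (fun _ _ => 0)); [|exact HF|apply C1_at_const].
  assert (Hnear : locally (F x y) (fun z => forall b, C1_at (fun u _ => phi u) z b)).
  { generalize (locally_locally _ _ Hphi); apply filter_imp; intros z Hz b.
    apply (C1_at_fun_fst phi phi').
    - revert Hz; apply filter_imp; intros t [Ht _]; exact Ht.
    - exact (proj2 (locally_singleton _ _ Hz)). }
  assert (Hq : locally (F x y, 0)
      (fun p : R * R => forall b, C1_at (fun u _ => phi u) (fst p) b))
    by exact (continuous_fst (F x y) 0 _ Hnear).
  revert Hq; apply filter_imp; auto.
Qed.

Lemma C1_at_opp F x y : C1_at F x y -> C1_at (fun a b => - F a b) x y.
Proof.
  apply (C1_at_comp Ropp (fun _ => -1)).
  apply filter_forall; split; [auto_derive; trivial; ring|apply continuous_const].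
Qed.

Lemma C1_at_minus F G x y :
  C1_at F x y -> C1_at G x y -> C1_at (fun a b => F a b - G a b) x y.
Proof. intros; apply C1_at_plus; [|apply C1_at_opp]; assumption. Qed.

Lemma C1_at_exp F x y : C1_at F x y -> C1_at (fun a b => exp (F a b)) x y.
Proof.
  apply (C1_at_comp exp exp).
  apply filter_forall; split; [apply is_derive_exp|apply continuous_exp].
Qed.

Lemma C1_at_cos F x y : C1_at F x y -> C1_at (fun a b => cos (F a b)) x y.
Proof.
  apply (C1_at_comp cos (fun z => - sin z)).
  apply filter_forall; split; [apply is_derive_cos|].
  apply continuous_Ropp, (continuous_of_is_derive sin cos), is_derive_sin.
Qed.

Lemma C1_at_sin F x y : C1_at F x y -> C1_at (fun a b => sin (F a b)) x y.
Proof.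
  apply (C1_at_comp sin cos).
  apply filter_forall; split; [apply is_derive_sin|].
  apply (continuous_of_is_derive cos (fun z => - sin z)), is_derive_cos.
Qed.

Lemma C1_at_atan F x y : C1_at F x y -> C1_at (fun a b => atan (F a b)) x y.
Proof.
  apply (C1_at_comp atan (fun z => / (1 + z²))).
  apply filter_forall; intros z; split; [apply is_derive_atan|].
  apply continuous_Rinv_fun; [|pose proof (Rle_0_sqr z); lra].
  apply continuous_Rplus; [apply continuous_const|apply continuous_Rmult; apply continuous_id].
Qed.

Lemma C1_at_ln F x y : 0 < F x y -> C1_at F x y -> C1_at (fun a b => ln (F a b)) x y.
Proof.
  intros Hp; apply (C1_at_comp ln Rinv).
  generalize (open_gt 0 (F x y) Hp); apply filter_imp; intros z Hz.
  split; [apply is_derive_ln, Hz|apply continuous_Rinv; lra].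
Qed.

Lemma C1_at_inv F x y : F x y <> 0 -> C1_at F x y -> C1_at (fun a b => / F a b) x y.
Proof.
  intros Hp; apply (C1_at_comp Rinv (fun z => - / (z * z))).
  generalize (locally_neq0 _ Hp); apply filter_imp; intros z Hz.
  split; [auto_derive; trivial; field; exact Hz|].
  apply continuous_Ropp, continuous_Rinv_fun; [apply continuous_Rmult; apply continuous_id|].
  intros Hzz; apply Hz; nra.
Qed.

Lemma C1_at_sqrt F x y : 0 < F x y -> C1_at F x y -> C1_at (fun a b => sqrt (F a b)) x y.
Proof.
  intros Hp; apply (C1_at_comp sqrt (fun z => / (2 * sqrt z))).
  generalize (open_gt 0 (F x y) Hp); apply filter_imp; intros z Hz.
  assert (Hs : 0 < sqrt z) by (apply sqrt_lt_R0; exact Hz).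
  split; [auto_derive; trivial; field; lra|].
  apply continuous_Rinv_fun; [|lra].
  apply continuous_Rmult; [apply continuous_const|].
  apply (continuous_of_is_derive sqrt (fun z => / (2 * sqrt z))).
  auto_derive; trivial; field; lra.
Qed.

(* The head symbol is matched before applying a rule: failed unifications on
   real-number expressions are very slow. *)
Ltac C1_at_auto :=
  repeat match goal with
  | |- C1_at (fun _ _ => ?c) _ _ => apply C1_at_const
  | |- C1_at (fun a _ => a) _ _ => apply C1_at_fst
  | |- C1_at (fun _ b => b) _ _ => apply C1_at_snd
  | |- C1_at Rplus _ _ => apply C1_at_Rplus
  | |- C1_at Rmult _ _ => apply C1_at_Rmult
  | |- C1_at (fun _ _ => _ + _) _ _ => apply C1_at_plus
  | |- C1_at (fun _ _ => _ - _) _ _ => apply C1_at_minus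
  | |- C1_at (fun _ _ => _ * _) _ _ => apply C1_at_mult
  | |- C1_at (fun _ _ => - _) _ _ => apply C1_at_opp
  | |- C1_at (fun _ _ => exp _) _ _ => apply C1_at_exp
  | |- C1_at (fun _ _ => cos _) _ _ => apply C1_at_cos
  | |- C1_at (fun _ _ => sin _) _ _ => apply C1_at_sin
  | |- C1_at (fun _ _ => atan _) _ _ => apply C1_at_atan
  end.

Lemma sum_sq_pos x y : (x, y) <> (0, 0) -> 0 < x ^ 2 + y ^ 2.
Proof.
  intros H. destruct (Rle_lt_dec (x ^ 2 + y ^ 2) 0) as [H'|H']; [exfalso|exact H'].
  apply H; f_equal; nra.
Qed.

Lemma C1_at_sum_sq x y : C1_at (fun a b => a ^ 2 + b ^ 2) x y.
Proof. change (C1_at (fun a b => a * (a * 1) + b * (b * 1)) x y); C1_at_auto. Qed.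

Lemma exists_direction x y : (x, y) <> (0, 0) -> exists al, 0 < x * cos al + y * sin al.
Proof.
  intros H. destruct (Rtotal_order x 0) as [Hx|[->|Hx]].
  - exists PI; rewrite cos_PI, sin_PI; lra.
  - destruct (Rtotal_order y 0) as [Hy|[->|Hy]].
    + exists (- (PI / 2)); rewrite cos_neg, sin_neg, cos_PI2, sin_PI2; lra.
    + congruence.
    + exists (PI / 2); rewrite cos_PI2, sin_PI2; lra.
  - exists 0; rewrite cos_0, sin_0; lra.
Qed.

(* A polar angle of (x, y), valid on the open half-plane facing direction [al]. *)
Definition arg_near (al x y : R) : R :=
  al + atan ((y * cos al - x * sin al) / (x * cos al + y * sin al)).

Lemma polar_arg_near al x y : 0 < x * cos al + y * sin al ->
  x = sqrt (x ^ 2 + y ^ 2) * cos (arg_near al x y) /\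
  y = sqrt (x ^ 2 + y ^ 2) * sin (arg_near al x y).
Proof.
  intros Hu. unfold arg_near.
  set (c := cos al); set (s := sin al).
  set (u := x * c + y * s); set (v := y * c - x * s); set (t := v / u).
  change (0 < u) in Hu.
  assert (Hcs : c * c + s * s = 1) by (pose proof (sin2_cos2 al) as E; unfold Rsqr in E; unfold c, s; lra).
  assert (Ht : 0 <= t²) by apply Rle_0_sqr.
  assert (HS : 0 < sqrt (1 + t²)) by (apply sqrt_lt_R0; lra).
  assert (HSS : sqrt (1 + t²) * sqrt (1 + t²) = 1 + t²) by (apply sqrt_sqrt; lra).
  assert (Htu : t * u = v) by (unfold t; field; lra).
  assert (Hr : sqrt (x ^ 2 + y ^ 2) = sqrt (1 + t²) * u).
  { assert (Hsq : (sqrt (1 + t²) * u) * (sqrt (1 + t²) * u) = x ^ 2 + y ^ 2).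
    { transitivity ((sqrt (1 + t²) * sqrt (1 + t²)) * (u * u)); [ring|].
      rewrite HSS; unfold Rsqr.
      transitivity (u * u + (t * u) * (t * u)); [ring|].
      rewrite Htu; unfold u, v.
      transitivity ((x ^ 2 + y ^ 2) * (c * c + s * s)); [ring|].
      rewrite Hcs; ring. }
    rewrite <- Hsq, sqrt_square; [reflexivity|].
    apply Rmult_le_pos; lra. }
  rewrite cos_plus, sin_plus, cos_atan, sin_atan, Hr; fold c s.
  split.
  - transitivity (x * (c * c + s * s)); [rewrite Hcs; ring|].
    transitivity (u * c - s * (t * u)); [rewrite Htu; unfold u, v; ring|field; lra].
  - transitivity (y * (c * c + s * s)); [rewrite Hcs; ring|].
    transitivity (u * s + c * (t * u)); [rewrite Htu; unfold u, v; ring|field; lra].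
Qed.

Lemma C1_at_arg_near al x y : 0 < x * cos al + y * sin al -> C1_at (arg_near al) x y.
Proof.
  intros Hu. unfold arg_near, Rdiv. C1_at_auto.
  apply C1_at_inv; [lra|C1_at_auto].
Qed.

Lemma polar_sum_sq r a : (r * cos a) ^ 2 + (r * sin a) ^ 2 = r * r.
Proof. pose proof (sin2_cos2 a) as E; unfold Rsqr in E; nra. Qed.

Lemma polar_neq0 r a : 0 < r -> (r * cos a, r * sin a) <> (0, 0).
Proof.
  intros Hr E; injection E; intros Es Ec.
  pose proof (polar_sum_sq r a) as H; rewrite Ec, Es in H; nra.
Qed.

(** * Implicit differentiation *)

Lemma continuous_eps_delta (g : R -> R) x : continuous g x ->
  forall e, 0 < e -> exists d, 0 < d /\ forall y, Rabs (y - x) < d -> Rabs (g y - g x) < e.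
Proof.
  intros Hc e He. apply continuity_pt_filterlim in Hc.
  destruct (Hc e He) as [d [Hd H]]. exists d; split; [exact Hd|].
  intros y Hy. destruct (Req_dec y x) as [->|Hne].
  - rewrite Rminus_diag, Rabs_R0; exact He.
  - apply (H y); repeat split; auto.
Qed.

Lemma continuous2_eps_delta (g : R -> R -> R) x y :
  continuous (fun z : R * R => g (fst z) (snd z)) (x, y) ->
  forall e, 0 < e -> exists d, 0 < d /\
    forall u v, Rabs (u - x) < d -> Rabs (v - y) < d -> Rabs (g u v - g x y) < e.
Proof.
  intros Hc e He. apply continuity_2d_pt_filterlim in Hc.
  destruct (Hc (mkposreal e He)) as [d H].
  exists d; split; [apply cond_pos|intros; apply H; assumption].
Qed.

Lemma ratio_eps_delta a b e : b <> 0 -> 0 < e -> exists d, 0 < d /\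
  forall u w, Rabs (u - a) < d -> Rabs (w - b) < d -> w <> 0 /\ Rabs (u / w - a / b) < e.
Proof.
  intros Hb He.
  assert (Hc : continuous (fun z : R * R => fst z / snd z) (a, b)).
  { apply continuous_Rmult; [apply continuous_fst|].
    apply continuous_Rinv_fun; [apply continuous_snd|exact Hb]. }
  destruct (continuous2_eps_delta (fun u w => u / w) a b Hc e He) as [d [Hd H]].
  assert (Hk : 0 < Rabs b) by (apply Rabs_pos_lt; exact Hb).
  exists (Rmin d (Rabs b / 2)); split; [apply Rmin_pos; lra|].
  intros u w Hu Hw. pose proof (Rmin_l d (Rabs b / 2)); pose proof (Rmin_r d (Rabs b / 2)).
  split.
  - intros ->. rewrite Rminus_0_l, Rabs_Ropp in Hw; lra.
  - apply H; lra.
Qed.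

Lemma MVT_between (f df : R -> R) a b :
  (forall x, Rabs (x - a) <= Rabs (b - a) -> Rabs (x - b) <= Rabs (b - a) ->
     is_derive f x (df x)) ->
  exists c, Rabs (c - a) <= Rabs (b - a) /\ Rabs (c - b) <= Rabs (b - a) /\
    f b - f a = df c * (b - a).
Proof.
  intros Hd.
  assert (Hbetween : forall x, Rmin a b <= x <= Rmax a b ->
            Rabs (x - a) <= Rabs (b - a) /\ Rabs (x - b) <= Rabs (b - a)).
  { intros x; unfold Rmin, Rmax; destruct (Rle_dec a b); intros;
      unfold Rabs; repeat destruct Rcase_abs; lra. }
  destruct (MVT_gen f a b df) as [c [Hc E]].
  - intros x Hx; apply Hd; apply Hbetween; lra.
  - intros x Hx; apply continuity_pt_filterlim, (ex_derive_continuous f).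
    eexists; apply Hd; apply Hbetween, Hx.
  - exists c; split; [|split]; [apply Hbetween, Hc ..|exact E].
Qed.

(* Two mean value theorems write the difference quotient of [be] as [- Ks / Kb]
   evaluated at intermediate points. *)
Lemma is_derive_implicit (K Kb Ks : R -> R -> R) (be : R -> R) s0 d :
  0 < d ->
  (forall s, Rabs (s - s0) < d -> K (be s) s = 0) ->
  continuous be s0 ->
  (forall b s, Rabs (b - be s0) < d -> Rabs (s - s0) < d ->
     is_derive (fun b => K b s) b (Kb b s)) ->
  (forall s, Rabs (s - s0) < d -> is_derive (K (be s0)) s (Ks (be s0) s)) ->
  continuous (fun z : R * R => Kb (fst z) (snd z)) (be s0, s0) ->
  continuous (Ks (be s0)) s0 ->
  Kb (be s0) s0 <> 0 ->
  is_derive be s0 (- Ks (be s0) s0 / Kb (be s0) s0).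
Proof.
  intros Hd HK Hbe HKb HKs cKb cKs Hnz.
  set (b0 := be s0) in *.
  apply is_derive_Reals; intros eps Heps.
  destruct (ratio_eps_delta (- Ks b0 s0) (Kb b0 s0) eps Hnz Heps) as [e [He Hratio]].
  destruct (continuous2_eps_delta _ _ _ cKb e He) as [d1 [Hd1 H1]].
  destruct (continuous_eps_delta _ _ cKs e He) as [d2 [Hd2 H2]].
  destruct (continuous_eps_delta _ _ Hbe (Rmin d d1) ltac:(apply Rmin_pos; lra)) as [d3 [Hd3 H3]].
  pose proof (Rmin_l d d1); pose proof (Rmin_r d d1).
  set (dl := Rmin (Rmin d d1) (Rmin d2 d3)).
  assert (Hdl : 0 < dl) by (unfold dl; repeat apply Rmin_pos; lra).
  assert (Hdl1 : dl <= Rmin d d1) by apply Rmin_l.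
  assert (Hdl2 : dl <= Rmin d2 d3) by apply Rmin_r.
  pose proof (Rmin_l d2 d3); pose proof (Rmin_r d2 d3).
  exists (mkposreal dl Hdl); intros h Hh0 Hh; simpl in Hh.
  set (s := s0 + h).
  assert (Hs : Rabs (s - s0) < dl) by (unfold s; replace (s0 + h - s0) with h by ring; exact Hh).
  assert (Hbs : Rabs (be s - b0) < Rmin d d1) by (apply H3; lra).
  destruct (MVT_between (fun b => K b s) (fun b => Kb b s) b0 (be s)) as [xi [Hxi [_ E1]]].
  { intros x Hx _; apply HKb; lra. }
  destruct (MVT_between (K b0) (Ks b0) s0 s) as [eta [Heta [_ E2]]].
  { intros x Hx _; apply HKs; lra. }
  rewrite (HK s) in E1 by lra.
  assert (HK0 : K b0 s0 = 0) by (apply HK; rewrite Rminus_diag, Rabs_R0; lra).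
  rewrite HK0 in E2. replace (s - s0) with h in E2 by (unfold s; ring).
  destruct (Hratio (- Ks b0 eta) (Kb xi s)) as [Hw Hq].
  { replace (- Ks b0 eta - - Ks b0 s0) with (- (Ks b0 eta - Ks b0 s0)) by ring.
    rewrite Rabs_Ropp; apply H2; lra. }
  { apply H1; lra. }
  fold b0; replace ((be s - b0) / h) with (- Ks b0 eta / Kb xi s); [exact Hq|].
  field_simplify_eq; [lra|auto..].
Qed.

Lemma locally_line_fst (P : R * R -> Prop) x y : locally (x, y) P ->
  exists d, 0 < d /\ forall s, Rabs (s - x) < d -> P (s, y).
Proof.
  intros [e He]; exists e; split; [apply cond_pos|].
  intros s Hs; apply He; split; [exact Hs|apply ball_center].
Qed.

Lemma locally_line_snd (P : R * R -> Prop) x y : locally (x, y) P ->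
  exists d, 0 < d /\ forall s, Rabs (s - y) < d -> P (x, s).
Proof.
  intros [e He]; exists e; split; [apply cond_pos|].
  intros s Hs; apply He; split; [apply ball_center|exact Hs].
Qed.

Lemma continuous_line_fst (G : R -> R -> R) x y :
  continuous (fun q : R * R => G (fst q) (snd q)) (x, y) -> continuous (fun s => G s y) x.
Proof. apply (continuous_comp_2 (fun s => s) (fun _ => y) G); [apply continuous_id|apply continuous_const]. Qed.

Lemma continuous_line_snd (G : R -> R -> R) x y :
  continuous (fun q : R * R => G (fst q) (snd q)) (x, y) -> continuous (fun s => G x s) y.
Proof. apply (continuous_comp_2 (fun _ => x) (fun s => s) G); [apply continuous_const|apply continuous_id]. Qed.

Lemma continuous_of_increasing_zero {T : UniformSpace} (g : T -> R -> R) (be : T -> R) q0 :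
  (forall q b1 b2, 0 < b1 -> b1 < b2 -> g q b1 < g q b2) ->
  (forall b, 0 < b -> continuous (fun q => g q b) q0) ->
  locally q0 (fun q => 0 < be q /\ g q (be q) = 0) ->
  continuous be q0.
Proof.
  intros Hinc Hc HN.
  destruct (locally_singleton _ _ HN) as [Hb0 Hg0].
  apply filterlim_locally; intros eps.
  set (b0 := be q0) in *.
  set (e := Rmin (eps / 2) (b0 / 2)).
  assert (He : 0 < e) by (apply Rmin_pos; pose proof (cond_pos eps); lra).
  assert (He1 : e <= eps / 2) by apply Rmin_l.
  assert (He2 : e <= b0 / 2) by apply Rmin_r.
  assert (Hp : 0 < g q0 (b0 + e)) by (rewrite <- Hg0; apply Hinc; lra).
  assert (Hm : 0 < - g q0 (b0 - e)) by (pose proof (Hinc q0 (b0 - e) b0 ltac:(lra) ltac:(lra)); lra).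
  pose proof (continuous_pos_locally _ _ (Hc (b0 + e) ltac:(lra)) Hp) as Np.
  pose proof (continuous_pos_locally _ _ (continuous_Ropp _ _ (Hc (b0 - e) ltac:(lra))) Hm) as Nm.
  generalize (filter_and _ _ HN (filter_and _ _ Np Nm)); apply filter_imp; intros q [[Hbq Hgq] [Hq1 Hq2]]; cbv beta in Hq1, Hq2.
  assert (Hup : be q < b0 + e).
  { apply Rnot_le_lt; intros H; destruct (Rle_lt_or_eq_dec _ _ H) as [H'|H'].
    - pose proof (Hinc q (b0 + e) (be q) ltac:(lra) H'); lra.
    - rewrite <- H' in Hgq; lra. }
  assert (Hlow : b0 - e < be q).
  { apply Rnot_le_lt; intros H; destruct (Rle_lt_or_eq_dec _ _ H) as [H'|H'].
    - pose proof (Hinc q (be q) (b0 - e) Hbq H'); lra.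
    - rewrite H' in Hgq; lra. }
  unfold ball; simpl; unfold AbsRing_ball, abs, minus, plus, opp; simpl.
  pose proof (cond_pos eps); unfold Rabs; destruct Rcase_abs; lra.
Qed.

(** * The inverse of T *)

Lemma cos_sin_eq_mod_2PI a c : cos a = cos c -> sin a = sin c ->
  exists k, a = c + 2 * PI * IZR k.
Proof.
  intros Hc Hs.
  assert (H1 : cos (a - c) = 1).
  { rewrite cos_minus, Hc, Hs. pose proof (sin2_cos2 c) as E; unfold Rsqr in E; lra. }
  assert (H2 : sin ((a - c) / 2) = 0).
  { pose proof (cos_2a_sin ((a - c) / 2)) as E.
    replace (2 * ((a - c) / 2)) with (a - c) in E by field.
    rewrite H1 in E; nra. }
  destruct (sin_eq_0_0 _ H2) as [k Hk]; exists k; lra.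
Qed.

Lemma exp_half_ln z : 0 < z -> exp (1 / 2 * ln z) = sqrt z.
Proof.
  intros Hz. apply Rsqr_inj; [left; apply exp_pos|apply sqrt_pos|].
  unfold Rsqr; rewrite sqrt_sqrt, <- exp_plus by lra.
  replace (1 / 2 * ln z + 1 / 2 * ln z) with (ln z) by field.
  apply exp_ln, Hz.
Qed.

(* Partial derivatives of psi_beta; [psi_bphi psi] is [psi_bp psi - psi_bb psi]. *)
Definition psi_bb (psi : R -> R -> R) (b p : R) : R := Derive (fun t => dpsi psi t p) b.
Definition psi_bp (psi : R -> R -> R) (b p : R) : R := Derive (fun t => dpsi psi b t) p.

(* [b] is the beta-coordinate of the preimage of (x, y): with q a polar angle of
   (x, y), one has (x, y) = Tmap mu psi b (q - b). *)
Definition preimage_beta mu psi (x y b : R) : Prop :=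
  0 < b /\ exists q, x = sqrt (x ^ 2 + y ^ 2) * cos q /\ y = sqrt (x ^ 2 + y ^ 2) * sin q /\
                     dpsi psi b (q - b) = - mu * (x ^ 2 + y ^ 2).

Definition Tinv_beta mu psi (x y : R) : R := epsilon (inhabits 0) (preimage_beta mu psi x y).

(* With q a polar angle of (x, y) and b = Tinv_beta, these are cos (q - b) and
   sin (q - b). *)
Definition Tinv_cos mu psi (x y : R) : R :=
  (x * cos (Tinv_beta mu psi x y) + y * sin (Tinv_beta mu psi x y)) / sqrt (x ^ 2 + y ^ 2).
Definition Tinv_sin mu psi (x y : R) : R :=
  (y * cos (Tinv_beta mu psi x y) - x * sin (Tinv_beta mu psi x y)) / sqrt (x ^ 2 + y ^ 2).

Section Inverse.
Variables (mu : R) (psi : R -> R -> R) (m M : R).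
Hypothesis mu_pos : 0 < mu.
Hypothesis psi_periodic : forall b p, 0 < b -> psi b (p + 2 * PI) = psi b p.
Hypothesis dpsi_C1 : C1_on (fun b _ => 0 < b) (dpsi psi).
Hypothesis m_pos : 0 < m.
Hypothesis m_le_M : m <= M.
Hypothesis dpsi_bounds : forall b p, 0 < b ->
  - M * Rpower b (- (2 * mu)) <= dpsi psi b p <= - m * Rpower b (- (2 * mu)).
Hypothesis psi_bphi_neg : forall b p, 0 < b -> psi_bphi psi b p < 0.

Local Notation f := (dpsi psi).

Lemma C1_at_dpsi b p : 0 < b -> C1_at f b p.
Proof.
  intros Hb; apply (C1_at_of_C1_on (fun b _ => 0 < b)); [|exact dpsi_C1].
  exact (continuous_pos_locally fst (b, p) (continuous_fst b p) Hb).
Qed.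

Lemma dpsi_neg b p : 0 < b -> f b p < 0.
Proof.
  intros Hb. destruct (dpsi_bounds b p Hb) as [_ H].
  assert (0 < Rpower b (- (2 * mu))) by apply exp_pos. nra.
Qed.

Lemma Tmap_polar b p : 0 < b ->
  Tmap mu psi b p = (sqrt (- f b p / mu) * cos (b + p), sqrt (- f b p / mu) * sin (b + p)).
Proof.
  intros Hb; unfold Tmap, Bmap, Amap; simpl.
  rewrite exp_half_ln; [reflexivity|].
  apply Rdiv_lt_0_compat; [pose proof (dpsi_neg b p Hb)|]; lra.
Qed.

Lemma C1_at_Tmap_radius b p : 0 < b -> C1_at (fun b p => exp (1 / 2 * ln (- f b p / mu))) b p.
Proof.
  intros Hb; unfold Rdiv at 2; C1_at_auto.
  apply C1_at_ln.
  - apply Rmult_lt_0_compat; [pose proof (dpsi_neg b p Hb); lra|apply Rinv_0_lt_compat, mu_pos].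
  - C1_at_auto; apply C1_at_dpsi, Hb.
Qed.

Lemma C1_at_Tmap_fst b p : 0 < b -> C1_at (fun b p => fst (Tmap mu psi b p)) b p.
Proof.
  intros Hb; apply (C1_at_mult _ (fun b p => cos (b + p)));
    [apply C1_at_Tmap_radius, Hb|C1_at_auto].
Qed.

Lemma C1_at_Tmap_snd b p : 0 < b -> C1_at (fun b p => snd (Tmap mu psi b p)) b p.
Proof.
  intros Hb; apply (C1_at_mult _ (fun b p => sin (b + p)));
    [apply C1_at_Tmap_radius, Hb|C1_at_auto].
Qed.

Lemma psi_periodic_Z k b p : 0 < b -> psi b (p + 2 * PI * IZR k) = psi b p.
Proof.
  intros Hb. induction k as [|k IH|k IH] using Z.peano_ind.
  - f_equal; simpl; ring.
  - rewrite <- IH, succ_IZR.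
    replace (p + 2 * PI * (IZR k + 1)) with (p + 2 * PI * IZR k + 2 * PI) by ring.
    apply psi_periodic, Hb.
  - rewrite <- IH, <- Z.sub_1_r, minus_IZR.
    replace (p + 2 * PI * IZR k) with (p + 2 * PI * (IZR k - 1) + 2 * PI) by ring.
    rewrite psi_periodic; [reflexivity|exact Hb].
Qed.

Lemma dpsi_angle_eq b a c : 0 < b -> cos a = cos c -> sin a = sin c -> f b a = f b c.
Proof.
  intros Hb Hc Hs. destruct (cos_sin_eq_mod_2PI a c Hc Hs) as [k ->].
  apply Derive_ext_loc.
  generalize (open_gt 0 b Hb); apply filter_imp; intros t Ht; apply psi_periodic_Z, Ht.
Qed.

Lemma is_derive_dpsi_antidiag c b : 0 < b ->
  is_derive (fun t => f t (c - t)) b (psi_bb psi b (c - b) - psi_bp psi b (c - b)).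
Proof.
  intros Hb.
  replace (psi_bb psi b (c - b) - psi_bp psi b (c - b))
    with (psi_bb psi b (c - b) * 1 + psi_bp psi b (c - b) * (-1)) by ring.
  apply (is_derive_comp2 f (fun t => t) (fun t => c - t)); [apply C1_at_dpsi, Hb|..];
    auto_derive; trivial; ring.
Qed.

(* Along a line beta + phi = c the derivative of psi_beta is -psi_{beta phi} > 0. *)
Lemma dpsi_antidiag_increasing c b1 b2 : 0 < b1 -> b1 < b2 -> f b1 (c - b1) < f b2 (c - b2).
Proof.
  intros H1 H2.
  destruct (MVT_between (fun t => f t (c - t))
              (fun t => psi_bb psi t (c - t) - psi_bp psi t (c - t)) b1 b2) as [z [_ [Hz Hd]]].
  { intros x _ Hx; apply is_derive_dpsi_antidiag.
    rewrite (Rabs_right (b2 - b1)) in Hx by lra; apply Rabs_le_between in Hx; lra. }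
  rewrite (Rabs_right (b2 - b1)) in Hz by lra; apply Rabs_le_between in Hz.
  pose proof (psi_bphi_neg z (c - z) ltac:(lra)) as Hn; unfold psi_bphi in Hn.
  unfold psi_bb, psi_bp in Hd. nra.
Qed.

Lemma preimage_beta_any_angle x y b q : (x, y) <> (0, 0) -> preimage_beta mu psi x y b ->
  x = sqrt (x ^ 2 + y ^ 2) * cos q -> y = sqrt (x ^ 2 + y ^ 2) * sin q ->
  f b (q - b) = - mu * (x ^ 2 + y ^ 2).
Proof.
  intros Hn [Hb [q0 [E1 [E2 E3]]]] Ex Ey.
  assert (Hr : 0 < sqrt (x ^ 2 + y ^ 2)) by apply sqrt_lt_R0, sum_sq_pos, Hn.
  assert (Hc : cos q = cos q0) by (apply (Rmult_eq_reg_l (sqrt (x ^ 2 + y ^ 2))); lra).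
  assert (Hs : sin q = sin q0) by (apply (Rmult_eq_reg_l (sqrt (x ^ 2 + y ^ 2))); lra).
  rewrite <- E3; apply dpsi_angle_eq; [exact Hb| |].
  - rewrite !cos_minus, Hc, Hs; reflexivity.
  - rewrite !sin_minus, Hc, Hs; reflexivity.
Qed.

Lemma preimage_beta_unique x y b1 b2 : (x, y) <> (0, 0) ->
  preimage_beta mu psi x y b1 -> preimage_beta mu psi x y b2 -> b1 = b2.
Proof.
  intros Hn H1 H2. pose proof H1 as [Hb1 [q [E1 [E2 E3]]]].
  pose proof (preimage_beta_any_angle x y b2 q Hn H2 E1 E2) as E4.
  destruct H2 as [Hb2 _].
  destruct (Rtotal_order b1 b2) as [Hl|[Hl|Hl]]; [|exact Hl|].
  - pose proof (dpsi_antidiag_increasing q b1 b2 Hb1 Hl); lra.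
  - pose proof (dpsi_antidiag_increasing q b2 b1 Hb2 Hl); lra.
Qed.

Lemma Rpower_neg_2mu_onto X : 0 < X ->
  0 < Rpower X (- / (2 * mu)) /\ Rpower (Rpower X (- / (2 * mu))) (- (2 * mu)) = X.
Proof.
  intros HX; split; [apply exp_pos|].
  rewrite Rpower_mult. replace (- / (2 * mu) * - (2 * mu)) with 1 by (field; lra).
  apply Rpower_1, HX.
Qed.

(* The bounds on psi_beta force a sign change of b |-> f b (q - b) + mu r^2 between
   the points where b^(-2 mu) equals 2 mu r^2 / m and mu r^2 / (2 M). *)
Lemma preimage_beta_exists x y : (x, y) <> (0, 0) -> exists b, preimage_beta mu psi x y b.
Proof.
  intros Hn. destruct (exists_direction x y Hn) as [al Hal].
  destruct (polar_arg_near al x y Hal) as [E1 E2]. set (q := arg_near al x y) in *.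
  set (r2 := x ^ 2 + y ^ 2) in *.
  assert (Hr2 : 0 < r2) by apply sum_sq_pos, Hn.
  destruct (Rpower_neg_2mu_onto (2 * mu * r2 / m)) as [Hlo PX]; [apply Rdiv_lt_0_compat; nra|].
  destruct (Rpower_neg_2mu_onto (mu * r2 / (2 * M))) as [Hhi PY]; [apply Rdiv_lt_0_compat; nra|].
  set (blo := Rpower (2 * mu * r2 / m) (- / (2 * mu))) in *.
  set (bhi := Rpower (mu * r2 / (2 * M)) (- / (2 * mu))) in *.
  set (g := fun t => f t (q - t) + mu * r2).
  assert (Glo : g blo < 0).
  { unfold g. destruct (dpsi_bounds blo (q - blo) Hlo) as [_ H]. rewrite PX in H.
    assert (m * (2 * mu * r2 / m) = 2 * mu * r2) by (field; lra). nra. }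
  assert (Ghi : 0 < g bhi).
  { unfold g. destruct (dpsi_bounds bhi (q - bhi) Hhi) as [H _]. rewrite PY in H.
    assert (M * (mu * r2 / (2 * M)) = mu * r2 / 2) by (field; lra). nra. }
  assert (Hlh : blo < bhi).
  { destruct (Rtotal_order blo bhi) as [Hl|[Hl|Hl]]; [exact Hl|rewrite Hl in Glo; lra|].
    pose proof (dpsi_antidiag_increasing q bhi blo Hhi Hl); unfold g in *; lra. }
  destruct (Ranalysis5.IVT_interv g blo bhi) as [z [Hz Gz]]; [|exact Hlh|exact Glo|exact Ghi|].
  { intros a Ha; apply continuity_pt_filterlim; unfold g.
    apply (ex_derive_continuous (fun t => f t (q - t) + mu * r2)).
    apply (ex_derive_plus (fun t => f t (q - t)) (fun _ => mu * r2)); [|apply ex_derive_const].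
    eexists; apply is_derive_dpsi_antidiag; lra. }
  exists z; split; [lra|]. exists q; repeat split; [exact E1|exact E2|].
  unfold g in Gz; fold r2; lra.
Qed.

Lemma Tinv_beta_spec x y : (x, y) <> (0, 0) -> preimage_beta mu psi x y (Tinv_beta mu psi x y).
Proof. intros Hn; unfold Tinv_beta; apply epsilon_spec, preimage_beta_exists, Hn. Qed.

Lemma continuous_dpsi_comp {T : UniformSpace} (u v : T -> R) z :
  continuous u z -> continuous v z -> 0 < u z ->
  continuous (fun w => f (u w) (v w)) z /\
  continuous (fun w => psi_bb psi (u w) (v w)) z /\
  continuous (fun w => psi_bp psi (u w) (v w)) z.
Proof.
  intros Hu Hv Hp. destruct (C1_at_dpsi (u z) (v z) Hp) as [_ [H0 [H1 H2]]].
  repeat split; apply continuous_comp_2; assumption.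
Qed.

(* Derivative of the solution b of [f b (w - b) + mu r = 0] when w and r move at
   rates dw and dr; the denominator is -psi_bphi > 0. *)
Definition beta_slope (b w dw dr : R) : R :=
  - (psi_bp psi b (w - b) * dw + mu * dr) / (psi_bb psi b (w - b) - psi_bp psi b (w - b)).

Lemma continuous_beta_slope {T : UniformSpace} (be w dw dr : T -> R) z :
  continuous be z -> continuous w z -> continuous dw z -> continuous dr z -> 0 < be z ->
  continuous (fun q => beta_slope (be q) (w q) (dw q) (dr q)) z.
Proof.
  intros Hb Hw Hdw Hdr Hp.
  destruct (continuous_dpsi_comp be (fun q => w q - be q) z Hb
              (continuous_Rminus _ _ _ Hw Hb) Hp) as [_ [Hbb Hbp]].
  unfold beta_slope, Rdiv.
  apply continuous_Rmult.
  - apply continuous_Ropp, continuous_Rplus; apply continuous_Rmult; auto.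
    apply continuous_const.
  - apply continuous_Rinv_fun; [apply continuous_Rminus; assumption|].
    pose proof (psi_bphi_neg (be z) (w z - be z) Hp) as H; unfold psi_bphi in H.
    unfold psi_bb, psi_bp; lra.
Qed.

Lemma is_derive_implicit_beta (W P B : R -> R) s1 d : 0 < d ->
  (forall s, Rabs (s - s1) < d -> 0 < B s /\ f (B s) (W s - B s) + mu * P s = 0 /\
                                  ex_derive W s /\ ex_derive P s) ->
  continuous B s1 -> continuous (Derive W) s1 -> continuous (Derive P) s1 ->
  is_derive B s1 (beta_slope (B s1) (W s1) (Derive W s1) (Derive P s1)).
Proof.
  intros Hd HN HB HdW HdP.
  destruct (HN s1 ltac:(rewrite Rminus_diag, Rabs_R0; lra)) as [HB1 [_ [HW1 _]]].
  assert (cW : continuous W s1) by (apply (ex_derive_continuous W), HW1).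
  pose proof (Rmin_l d (B s1)) as Hmin1; pose proof (Rmin_r d (B s1)) as Hmin2.
  apply (is_derive_implicit (fun b s => f b (W s - b) + mu * P s)
           (fun b s => psi_bb psi b (W s - b) - psi_bp psi b (W s - b))
           (fun b s => psi_bp psi b (W s - b) * Derive W s + mu * Derive P s) B s1 (Rmin d (B s1))).
  - apply Rmin_pos; lra.
  - intros s Hs; apply HN; lra.
  - exact HB.
  - intros b s Hb _. apply Rabs_lt_between' in Hb.
    replace (psi_bb psi b (W s - b) - psi_bp psi b (W s - b))
      with (psi_bb psi b (W s - b) - psi_bp psi b (W s - b) + 0) by ring.
    apply is_derive_Rplus; [|auto_derive; trivial].
    apply is_derive_dpsi_antidiag; lra.
  - intros s Hs. destruct (HN s ltac:(lra)) as [_ [_ [HWs HPs]]].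
    apply is_derive_Rplus; [|auto_derive; [exact HPs|rewrite Rmult_1_l; reflexivity]].
    replace (psi_bp psi (B s1) (W s - B s1) * Derive W s)
      with (psi_bb psi (B s1) (W s - B s1) * 0 + psi_bp psi (B s1) (W s - B s1) * Derive W s) by ring.
    apply (is_derive_comp2 f (fun _ => B s1) (fun t => W t - B s1));
      [apply C1_at_dpsi, HB1|auto_derive; trivial|auto_derive; [exact HWs|rewrite Rmult_1_l; reflexivity]].
  - destruct (continuous_dpsi_comp fst (fun z : R * R => W (snd z) - fst z) (B s1, s1)
               (continuous_fst _ _)
               (continuous_Rminus _ _ _ (continuous_comp snd W _ (continuous_snd _ _) cW)
                  (continuous_fst _ _)) HB1) as [_ [Hbb Hbp]].
    apply continuous_Rminus; assumption.
  - destruct (continuous_dpsi_comp (fun _ => B s1) (fun s => W s - B s1) s1 (continuous_const _ _)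
               (continuous_Rminus _ _ _ cW (continuous_const _ _)) HB1) as [_ [_ Hbp]].
    apply continuous_Rplus; apply continuous_Rmult; auto; apply continuous_const.
  - pose proof (psi_bphi_neg (B s1) (W s1 - B s1) HB1) as Hneg; unfold psi_bphi in Hneg.
    unfold psi_bb, psi_bp; lra.
Qed.

Definition beta_equation_at (w rho be : R -> R -> R) (q : R * R) : Prop :=
  C1_at w (fst q) (snd q) /\ C1_at rho (fst q) (snd q) /\ 0 < be (fst q) (snd q) /\
  f (be (fst q) (snd q)) (w (fst q) (snd q) - be (fst q) (snd q)) + mu * rho (fst q) (snd q) = 0.

Lemma continuous_implicit_beta w rho be x y :
  locally (x, y) (beta_equation_at w rho be) -> continuous (fun q => be (fst q) (snd q)) (x, y).
Proof.
  intros HN. destruct (locally_singleton _ _ HN) as [[_ [Cw _]] [[_ [Cr _]] _]].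
  apply (continuous_of_increasing_zero
           (fun q b => f b (w (fst q) (snd q) - b) + mu * rho (fst q) (snd q))).
  - intros q b1 b2 Hb1 Hb12.
    pose proof (dpsi_antidiag_increasing (w (fst q) (snd q)) b1 b2 Hb1 Hb12); lra.
  - intros b Hb. apply continuous_Rplus.
    + exact (proj1 (continuous_dpsi_comp (fun _ => b) (fun q => w (fst q) (snd q) - b) (x, y)
               (continuous_const _ _) (continuous_Rminus _ _ _ Cw (continuous_const _ _)) Hb)).
    + apply continuous_Rmult; [apply continuous_const|exact Cr].
  - revert HN; apply filter_imp; intros q [_ [_ H]]; exact H.
Qed.

Lemma is_derive_implicit_beta_fst w rho be x y :
  locally (x, y) (beta_equation_at w rho be) ->
  is_derive (fun t => be t y) x
    (beta_slope (be x y) (w x y) (Derive (fun t => w t y) x) (Derive (fun t => rho t y) x)).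
Proof.
  intros HN. destruct (locally_singleton _ _ HN) as [[_ [_ [Dw _]]] [[_ [_ [Dr _]]] _]].
  destruct (locally_line_fst _ _ _ HN) as [d [Hd Hline]].
  apply (is_derive_implicit_beta (fun s => w s y) (fun s => rho s y) (fun s => be s y) x d Hd).
  - intros s Hs; destruct (Hline s Hs) as [Cw [Cr [Hb E]]].
    repeat split; [exact Hb|exact E|apply (C1_at_ex_derive _ _ _ Cw)|apply (C1_at_ex_derive _ _ _ Cr)].
  - apply (continuous_line_fst be), (continuous_implicit_beta w rho), HN.
  - apply (continuous_line_fst (fun a b => Derive (fun t => w t b) a)), Dw.
  - apply (continuous_line_fst (fun a b => Derive (fun t => rho t b) a)), Dr.
Qed.

Lemma is_derive_implicit_beta_snd w rho be x y :
  locally (x, y) (beta_equation_at w rho be) ->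
  is_derive (fun t => be x t) y
    (beta_slope (be x y) (w x y) (Derive (fun t => w x t) y) (Derive (fun t => rho x t) y)).
Proof.
  intros HN. destruct (locally_singleton _ _ HN) as [[_ [_ [_ Dw]]] [[_ [_ [_ Dr]]] _]].
  destruct (locally_line_snd _ _ _ HN) as [d [Hd Hline]].
  apply (is_derive_implicit_beta (fun s => w x s) (fun s => rho x s) (fun s => be x s) y d Hd).
  - intros s Hs; destruct (Hline s Hs) as [Cw [Cr [Hb E]]].
    repeat split; [exact Hb|exact E|apply (C1_at_ex_derive _ _ _ Cw)|apply (C1_at_ex_derive _ _ _ Cr)].
  - apply (continuous_line_snd be), (continuous_implicit_beta w rho), HN.
  - apply (continuous_line_snd (fun a b => Derive (fun t => w a t) b)), Dw.
  - apply (continuous_line_snd (fun a b => Derive (fun t => rho a t) b)), Dr.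
Qed.

Lemma C1_at_implicit_beta w rho be x y :
  locally (x, y) (beta_equation_at w rho be) -> C1_at be x y.
Proof.
  intros HN. pose proof (locally_locally _ _ HN) as HLL.
  destruct (locally_singleton _ _ HN) as [[_ [Cw [Dw1 Dw2]]] [[_ [Cr [Dr1 Dr2]]] [Hb _]]].
  repeat split.
  - revert HLL; apply filter_imp; intros [x1 y1] H1.
    split; eexists; [apply (is_derive_implicit_beta_fst w rho)|apply (is_derive_implicit_beta_snd w rho)]; exact H1.
  - apply (continuous_implicit_beta w rho), HN.
  - apply continuous_ext_loc with (fun q => beta_slope (be (fst q) (snd q)) (w (fst q) (snd q))
      (Derive (fun t => w t (snd q)) (fst q)) (Derive (fun t => rho t (snd q)) (fst q))).
    + revert HLL; apply filter_imp; intros [x1 y1] H1.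
      symmetry; apply is_derive_unique, (is_derive_implicit_beta_fst w rho), H1.
    + apply continuous_beta_slope; [apply (continuous_implicit_beta w rho), HN|assumption ..].
  - apply continuous_ext_loc with (fun q => beta_slope (be (fst q) (snd q)) (w (fst q) (snd q))
      (Derive (fun t => w (fst q) t) (snd q)) (Derive (fun t => rho (fst q) t) (snd q))).
    + revert HLL; apply filter_imp; intros [x1 y1] H1.
      symmetry; apply is_derive_unique, (is_derive_implicit_beta_snd w rho), H1.
    + apply continuous_beta_slope; [apply (continuous_implicit_beta w rho), HN|assumption ..].
Qed.

Lemma C1_at_Tinv_beta x0 y0 : (x0, y0) <> (0, 0) -> C1_at (Tinv_beta mu psi) x0 y0.
Proof.
  intros Hn. destruct (exists_direction x0 y0 Hn) as [al Hal].
  apply (C1_at_implicit_beta (arg_near al) (fun x y => x ^ 2 + y ^ 2)).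
  assert (Hc : continuous (fun q : R * R => fst q * cos al + snd q * sin al) (x0, y0)).
  { apply continuous_Rplus; apply continuous_Rmult;
      [apply continuous_fst|apply continuous_const|apply continuous_snd|apply continuous_const]. }
  generalize (continuous_pos_locally _ _ Hc Hal); apply filter_imp; intros [x y] Hu.
  unfold beta_equation_at; simpl in Hu |- *.
  assert (Hxy : (x, y) <> (0, 0)) by (intros E; injection E; intros; subst; lra).
  destruct (polar_arg_near al x y Hu) as [E1 E2].
  pose proof (Tinv_beta_spec x y Hxy) as Hspec.
  split; [apply C1_at_arg_near, Hu|split; [apply C1_at_sum_sq|split; [apply Hspec|]]].
  rewrite (preimage_beta_any_angle x y _ _ Hxy Hspec E1 E2); ring.
Qed.

Lemma C1_at_inv_norm x y : (x, y) <> (0, 0) -> C1_at (fun a b => / sqrt (a ^ 2 + b ^ 2)) x y.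
Proof.
  intros Hn; pose proof (sum_sq_pos x y Hn) as Hp.
  apply C1_at_inv; [apply Rgt_not_eq, sqrt_lt_R0, Hp|].
  apply C1_at_sqrt; [exact Hp|apply C1_at_sum_sq].
Qed.

Lemma C1_at_Tinv_cos x y : (x, y) <> (0, 0) -> C1_at (Tinv_cos mu psi) x y.
Proof.
  intros Hn; unfold Tinv_cos, Rdiv; C1_at_auto;
    [apply C1_at_Tinv_beta, Hn ..|apply C1_at_inv_norm, Hn].
Qed.

Lemma C1_at_Tinv_sin x y : (x, y) <> (0, 0) -> C1_at (Tinv_sin mu psi) x y.
Proof.
  intros Hn; unfold Tinv_sin, Rdiv; C1_at_auto;
    [apply C1_at_Tinv_beta, Hn ..|apply C1_at_inv_norm, Hn].
Qed.

Lemma Tmap_Tinv x y : (x, y) <> (0, 0) ->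
  0 < Tinv_beta mu psi x y /\ Tinv_cos mu psi x y ^ 2 + Tinv_sin mu psi x y ^ 2 = 1 /\
  forall p, cos p = Tinv_cos mu psi x y -> sin p = Tinv_sin mu psi x y ->
    Tmap mu psi (Tinv_beta mu psi x y) p = (x, y).
Proof.
  intros Hn. pose proof (sum_sq_pos x y Hn) as Hr2.
  destruct (Tinv_beta_spec x y Hn) as [Hb [q [E1 [E2 E3]]]].
  unfold Tinv_cos, Tinv_sin.
  set (b := Tinv_beta mu psi x y) in *; set (r := sqrt (x ^ 2 + y ^ 2)) in *.
  assert (Hr : 0 < r) by apply sqrt_lt_R0, Hr2.
  assert (Hc : (x * cos b + y * sin b) / r = cos (q - b))
    by (rewrite cos_minus, E1, E2 at 1; field; lra).
  assert (Hs : (y * cos b - x * sin b) / r = sin (q - b))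
    by (rewrite sin_minus, E1, E2 at 1; field; lra).
  rewrite Hc, Hs. split; [exact Hb|split].
  - pose proof (sin2_cos2 (q - b)) as E; unfold Rsqr in E; simpl; lra.
  - intros p Hcp Hsp.
    rewrite Tmap_polar, (dpsi_angle_eq b p (q - b) Hb Hcp Hsp), E3 by exact Hb.
    replace (- (- mu * (x ^ 2 + y ^ 2)) / mu) with (x ^ 2 + y ^ 2) by (field; lra).
    assert (Cb : cos (b + p) = cos q) by (rewrite cos_plus, Hcp, Hsp, <- cos_plus; f_equal; ring).
    assert (Sb : sin (b + p) = sin q) by (rewrite sin_plus, Hcp, Hsp, <- sin_plus; f_equal; ring).
    fold r; rewrite Cb, Sb, <- E1, <- E2; reflexivity.
Qed.

Lemma Tinv_Tmap b p : 0 < b ->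
  Tinv_beta mu psi (fst (Tmap mu psi b p)) (snd (Tmap mu psi b p)) = b /\
  Tinv_cos mu psi (fst (Tmap mu psi b p)) (snd (Tmap mu psi b p)) = cos p /\
  Tinv_sin mu psi (fst (Tmap mu psi b p)) (snd (Tmap mu psi b p)) = sin p.
Proof.
  intros Hb. rewrite Tmap_polar by exact Hb; simpl.
  set (z := - f b p / mu).
  assert (Hz : 0 < z) by (apply Rdiv_lt_0_compat; [pose proof (dpsi_neg b p Hb)|]; lra).
  set (r := sqrt z).
  assert (Hr : 0 < r) by apply sqrt_lt_R0, Hz.
  assert (Hnorm : sqrt ((r * cos (b + p)) ^ 2 + (r * sin (b + p)) ^ 2) = r)
    by (rewrite polar_sum_sq; apply sqrt_square; lra).
  assert (Hbeta : Tinv_beta mu psi (r * cos (b + p)) (r * sin (b + p)) = b).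
  { apply (preimage_beta_unique (r * cos (b + p)) (r * sin (b + p)));
      [apply polar_neq0, Hr|apply Tinv_beta_spec, polar_neq0, Hr|].
    split; [exact Hb|exists (b + p)].
    rewrite Hnorm; repeat split.
    replace (b + p - b) with p by ring.
    rewrite polar_sum_sq; unfold r; rewrite sqrt_sqrt by lra; unfold z; field; lra. }
  unfold Tinv_cos, Tinv_sin; rewrite Hbeta, Hnorm.
  split; [reflexivity|split].
  - replace p with (b + p - b) at 3 by ring. rewrite cos_minus; field; lra.
  - replace p with (b + p - b) at 3 by ring. rewrite sin_minus; field; lra.
Qed.

Lemma Tmap_neq0 b p : 0 < b -> Tmap mu psi b p <> (0, 0).
Proof.
  intros Hb; rewrite Tmap_polar by exact Hb.
  apply polar_neq0, sqrt_lt_R0, Rdiv_lt_0_compat; [pose proof (dpsi_neg b p Hb)|]; lra.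
Qed.

End Inverse.

Theorem proposition4p1 (mu : R) (psi : R -> R -> R) (m M : R) :
  0 < mu ->
  (forall b p, 0 < b -> psi b (p + 2 * PI) = psi b p) ->
  (forall b p, 0 < b -> ex_derive (fun t => psi t p) b) ->
  C1_on (fun b _ => 0 < b) (dpsi psi) ->
  0 < m -> m <= M ->
  (forall b p, 0 < b ->
     - M * Rpower b (- (2 * mu)) <= dpsi psi b p <= - m * Rpower b (- (2 * mu))) ->
  (forall b p, 0 < b -> psi_bphi psi b p < 0) ->
  C1_on (fun b _ => 0 < b) (fun b p => fst (Tmap mu psi b p)) /\
  C1_on (fun b _ => 0 < b) (fun b p => snd (Tmap mu psi b p)) /\
  (forall b p, 0 < b -> Tmap mu psi b p <> (0, 0)) /\
  exists bi ci si : R -> R -> R,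
    C1_on (fun x y => (x, y) <> (0, 0)) bi /\
    C1_on (fun x y => (x, y) <> (0, 0)) ci /\
    C1_on (fun x y => (x, y) <> (0, 0)) si /\
    (forall x y, (x, y) <> (0, 0) ->
       0 < bi x y /\ ci x y ^ 2 + si x y ^ 2 = 1 /\
       forall p, cos p = ci x y -> sin p = si x y ->
         Tmap mu psi (bi x y) p = (x, y)) /\
    (forall b p, 0 < b ->
       bi (fst (Tmap mu psi b p)) (snd (Tmap mu psi b p)) = b /\
       ci (fst (Tmap mu psi b p)) (snd (Tmap mu psi b p)) = cos p /\
       si (fst (Tmap mu psi b p)) (snd (Tmap mu psi b p)) = sin p).
Proof.
  (* The existence of psi_beta is already part of the C^1 hypothesis on [dpsi psi]. *)
  intros Hmu Hper _ HC1 Hm HmM Hbd Hneg.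
  split; [apply C1_on_intro; intros; eapply (C1_at_Tmap_fst mu psi m M); eassumption|].
  split; [apply C1_on_intro; intros; eapply (C1_at_Tmap_snd mu psi m M); eassumption|].
  split; [intros; eapply (Tmap_neq0 mu psi m M); eassumption|].
  exists (Tinv_beta mu psi), (Tinv_cos mu psi), (Tinv_sin mu psi).
  split; [apply C1_on_intro; intros; eapply (C1_at_Tinv_beta mu psi m M); eassumption|].
  split; [apply C1_on_intro; intros; eapply (C1_at_Tinv_cos mu psi m M); eassumption|].
  split; [apply C1_on_intro; intros; eapply (C1_at_Tinv_sin mu psi m M); eassumption|].
  split; intros; [eapply (Tmap_Tinv mu psi m M)|eapply (Tinv_Tmap mu psi m M)]; eassumption.
Qed.
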